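(* Let $X,Y$ be finite-dimensional complex spaces endowed with distances compatible with their topologies and let $\phi:X\to Y$ be a proper holomorphic map (locally Lipschitz, so that pushforwards are defined). Let $T\in\mathcal D_k(X)$ be a current for which $\partial T$ and $\overline{\partial}T$ are defined. Then $\partial\phi_\sharp T$ and $\overline\partial\phi_\sharp T$ are defined and $$\phi_\sharp\partial T=\partial\phi_\sharp T,\qquad \phi_\sharp\overline{\partial}T=\overline{\partial}\phi_\sharp T.$$
   Context: All functions are complex-valued. For a locally compact metric space $X$: $\mathcal D(X)$ = Lipschitz functions with compact support, $\mathcal D^m(X)=\mathcal D(X)\times[\mathrm{Lip}_{\mathrm{loc}}(X)]^m$. A local $m$-dimensional metric current (Lang) is a multilinear functional $T:\mathcal D^m(X)\to\mathbb C$, continuous under pointwise convergence with first entries supported in a fixed compact set and locally uniformly bounded Lipschitz constants, and local ($T(f,\pi)=0$ if some $\pi_j$ is constant near $\mathrm{supp} f$); space $\mathcal D_m(X)$. Boundary: $dT(f,\pi_1,\dots,\pi_{m-1})=T(\sigma,f,\pi_1,\dots,\pi_{m-1})$ with $\sigma\in\mathcal D(X)$ equal to $1$ on a neighbourhood of $\mathrm{supp} f$. Pushforward by proper locally Lipschitz $\phi$: $\phi_\sharp T(f,\pi)=T(f\circ\phi,\pi\circ\phi)$. $T\in\mathcal D_k(X)$ has bidimension $(p,q)$, $p+q=k$, if $T(f,\pi)=0$ whenever $p+1$ of the $\pi_j$ are holomorphic, or $q+1$ of the $\overline{\pi_j}$ are holomorphic, on an open set containing $\mathrm{supp} f$; space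 $\mathcal D_{p,q}(X)$. A Dolbeault decomposition of $S\in\mathcal D_m(X)$ is $S=\sum_{p+q=m}S_{p,q}$ with $S_{p,q}\in\mathcal D_{p,q}(X)$ (it is unique when it exists). If $T\in\mathcal D_{p,q}(X)$ and $dT$ admits a Dolbeault decomposition, then this decomposition has only components of bidimension $(p,q-1)$ and $(p-1,q)$, and one sets $\partial T=(dT)_{p-1,q}$, $\overline\partial T=(dT)_{p,q-1}$. For a general $T$, $\partial T$ and $\overline\partial T$ are defined when $T$ admits a Dolbeault decomposition $T=\sum T_{p,q}$ such that each $dT_{p,q}$ admits a Dolbeault decomposition; then $\partial T=\sum\partial T_{p,q}$, $\overline\partial T=\sum\overline\partial T_{p,q}$. *)

From HB Require Import structures.
From mathcomp Require Import all_boot all_order all_algebra.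
From mathcomp Require Import complex.
From mathcomp Require Import reals.
Set Implicit Arguments. Unset Strict Implicit. Unset Printing Implicit Defensive.
Import Order.TTheory GRing.Theory Num.Theory.
Local Open Scope ring_scope.

Definition cnorm (R : realType) (z : R[i]) : R := Normc.normc z.

Definition cvgC (R : realType) (u : nat -> R[i]) (l : R[i]) : Prop :=
  forall eps : R, 0 < eps -> exists N : nat, forall j, (N <= j)%N -> cnorm (u j - l) < eps.

Definition is_metric (R : realType) (X : Type) (d : X -> X -> R) : Prop :=
  (forall x y, 0 <= d x y) /\ (forall x y, d x y = 0 <-> x = y) /\
  (forall x y, d x y = d y x) /\ (forall x y z, d x z <= d x y + d y z).

Definition mopen (R : realType) (X : Type) (d : X -> X -> R) (U : X -> Prop) : Prop :=
  forall x, U x -> exists r : R, 0 < r /\ forall y, d x y < r -> U y.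

Definition mcompact (R : realType) (X : Type) (d : X -> X -> R) (K : X -> Prop) : Prop :=
  forall (I : Type) (O : I -> X -> Prop), (forall i, mopen d (O i)) ->
    (forall x, K x -> exists i, O i x) ->
    exists (n : nat) (g : 'I_n -> I), forall x, K x -> exists j, O (g j) x.

Definition mclosure (R : realType) (X : Type) (d : X -> X -> R) (S : X -> Prop) (x : X) : Prop :=
  forall r : R, 0 < r -> exists y, S y /\ d x y < r.

Definition supp (R : realType) (X : Type) (d : X -> X -> R) (f : X -> R[i]) : X -> Prop :=
  mclosure d (fun x => f x != 0).

Definition lipschitz_on (R : realType) (X : Type) (d : X -> X -> R) (S : X -> Prop) (L : R)
  (f : X -> R[i]) : Prop :=
  forall x y, S x -> S y -> cnorm (f x - f y) <= L * d x y.

Definition Dfun (R : realType) (X : Type) (d : X -> X -> R) (f : X -> R[i]) : Prop :=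
  (exists L : R, lipschitz_on d (fun _ => True) L f) /\ mcompact d (supp d f).

Definition liploc (R : realType) (X : Type) (d : X -> X -> R) (f : X -> R[i]) : Prop :=
  forall x, exists r L : R, 0 < r /\ lipschitz_on d (fun y => d x y < r) L f.

Definition Dm (R : realType) (X : Type) (d : X -> X -> R) (m : nat)
  (f : X -> R[i]) (pi : 'I_m -> X -> R[i]) : Prop :=
  Dfun d f /\ forall i, liploc d (pi i).

Definition vnorm (R : realType) (n : nat) (v : 'rV[R[i]]_n) : R :=
  \big[Num.max/0]_(i < n) cnorm (v 0 i).

Definition copen (R : realType) (n : nat) (W : 'rV[R[i]]_n -> Prop) : Prop :=
  forall a, W a -> exists r : R, 0 < r /\ forall z, vnorm (z - a) < r -> W z.

Definition holo (R : realType) (n : nat) (W : 'rV[R[i]]_n -> Prop) (g : 'rV[R[i]]_n -> R[i]) : Prop :=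
  copen W /\
  forall a, W a -> exists l : 'rV[R[i]]_n, forall eps : R, 0 < eps -> exists del : R, 0 < del /\
    forall z, W z -> vnorm (z - a) < del ->
      cnorm (g z - g a - \sum_(i < n) l 0 i * (z - a) 0 i) <= eps * vnorm (z - a).

Definition analytic_in (R : realType) (n : nat) (D A : 'rV[R[i]]_n -> Prop) : Prop :=
  copen D /\ (forall z, A z -> D z) /\
  forall a, D a -> exists W : 'rV[R[i]]_n -> Prop, W a /\ (forall z, W z -> D z) /\
    exists (r : nat) (g : 'I_r -> 'rV[R[i]]_n -> R[i]), (forall i, holo W (g i)) /\
      forall z, W z -> (A z <-> forall i, g i z = 0).

(* (Reduced) complex spaces: atlas of local models (analytic subsets   *)
(* of domains in C^n) with holomorphic transition maps.                *)
Record chart (R : realType) (X : Type) := Chart {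
  ch_n : nat;
  ch_U : X -> Prop;
  ch_D : 'rV[R[i]]_ch_n -> Prop;
  ch_A : 'rV[R[i]]_ch_n -> Prop;
  ch_h : X -> 'rV[R[i]]_ch_n;
  ch_k : 'rV[R[i]]_ch_n -> X }.
Arguments ch_n {R X} c.
Arguments ch_U {R X} c _.
Arguments ch_D {R X} c _.
Arguments ch_A {R X} c _.
Arguments ch_h {R X} c _.
Arguments ch_k {R X} c _.

Definition chart_ok (R : realType) (X : Type) (d : X -> X -> R) (c : chart R X) : Prop :=
  mopen d (ch_U c) /\ analytic_in (ch_D c) (ch_A c) /\
  (forall x, ch_U c x -> ch_A c (ch_h c x) /\ ch_k c (ch_h c x) = x) /\
  (forall z, ch_A c z -> ch_U c (ch_k c z) /\ ch_h c (ch_k c z) = z) /\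
  (forall x, ch_U c x -> forall eps : R, 0 < eps -> exists del : R, 0 < del /\
     forall y, ch_U c y -> d x y < del -> vnorm (ch_h c y - ch_h c x) < eps) /\
  (forall z, ch_A c z -> forall eps : R, 0 < eps -> exists del : R, 0 < del /\
     forall w, ch_A c w -> vnorm (w - z) < del -> d (ch_k c z) (ch_k c w) < eps).

Definition charts_compatible (R : realType) (X : Type) (c1 c2 : chart R X) : Prop :=
  forall x, ch_U c1 x -> ch_U c2 x ->
    exists W : 'rV[R[i]]_(ch_n c1) -> Prop, W (ch_h c1 x) /\ (forall z, W z -> ch_D c1 z) /\
      exists G : 'I_(ch_n c2) -> 'rV[R[i]]_(ch_n c1) -> R[i], (forall j, holo W (G j)) /\
        forall z, ch_A c1 z -> W z ->
          ch_U c2 (ch_k c1 z) /\ forall j, G j z = ch_h c2 (ch_k c1 z) 0 j.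

Definition hol_on (R : realType) (X : Type) (Atl : chart R X -> Prop)
  (U : X -> Prop) (g : X -> R[i]) : Prop :=
  forall c, Atl c -> forall x, U x -> ch_U c x ->
    exists W : 'rV[R[i]]_(ch_n c) -> Prop, W (ch_h c x) /\ (forall z, W z -> ch_D c z) /\
      exists G, holo W G /\
        forall z, ch_A c z -> W z -> U (ch_k c z) /\ G z = g (ch_k c z).

(* finite dimension: there is dd such that every point is an isolated point of
   the fibre of some holomorphic map to C^dd defined near it (dim_x X <= dd) *)
Definition finite_dimensional (R : realType) (X : Type) (d : X -> X -> R)
  (Atl : chart R X -> Prop) : Prop :=
  exists dd : nat, forall x, exists (U : X -> Prop) (g : 'I_dd -> X -> R[i]),
    mopen d U /\ U x /\ (forall i, hol_on Atl U (g i)) /\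
    exists r : R, 0 < r /\ forall y, U y -> d x y < r -> (forall i, g i y = g i x) -> y = x.

Definition complex_space (R : realType) (X : Type) (d : X -> X -> R)
  (Atl : chart R X -> Prop) : Prop :=
  is_metric d /\ (forall c, Atl c -> chart_ok d c) /\
  (forall x, exists c, Atl c /\ ch_U c x) /\
  (forall c1 c2, Atl c1 -> Atl c2 -> charts_compatible c1 c2) /\
  finite_dimensional d Atl.

Definition hol_map (R : realType) (X Y : Type) (dX : X -> X -> R) (AX : chart R X -> Prop)
  (dY : Y -> Y -> R) (AY : chart R Y -> Prop) (phi : X -> Y) : Prop :=
  (forall x (eps : R), 0 < eps -> exists del : R, 0 < del /\
     forall y, dX x y < del -> dY (phi x) (phi y) < eps) /\
  (forall (V : Y -> Prop) (g : Y -> R[i]), mopen dY V -> hol_on AY V g ->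
     hol_on AX (fun x => V (phi x)) (fun x => g (phi x))).

Definition proper_map (R : realType) (X Y : Type) (dX : X -> X -> R) (dY : Y -> Y -> R)
  (phi : X -> Y) : Prop :=
  forall K : Y -> Prop, mcompact dY K -> mcompact dX (fun x => K (phi x)).

Definition loc_lipschitz_map (R : realType) (X Y : Type) (dX : X -> X -> R) (dY : Y -> Y -> R)
  (phi : X -> Y) : Prop :=
  forall x, exists r L : R, 0 < r /\
    forall y z, dX x y < r -> dX x z < r -> dY (phi y) (phi z) <= L * dX y z.

(* Local metric currents (Lang).                                       *)
Definition fnl (R : realType) (X : Type) (m : nat) : Type :=
  (X -> R[i]) -> ('I_m -> X -> R[i]) -> R[i].

Definition upd (R : realType) (X : Type) (m : nat) (pi : 'I_m -> X -> R[i]) (i : 'I_m)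
  (u : X -> R[i]) : 'I_m -> X -> R[i] :=
  fun j => if j == i then u else pi j.

Definition current (R : realType) (X : Type) (d : X -> X -> R) (m : nat) (T : fnl R X m) : Prop :=
  (forall (a : R[i]) f g pi, Dm d f pi -> Dm d g pi ->
     T (fun x => a * f x + g x) pi = a * T f pi + T g pi) /\
  (forall (a : R[i]) f pi i u v, Dm d f pi -> liploc d u -> liploc d v ->
     T f (upd pi i (fun x => a * u x + v x)) = a * T f (upd pi i u) + T f (upd pi i v)) /\
  (forall (fs : nat -> X -> R[i]) (ps : nat -> 'I_m -> X -> R[i]) f pi,
     (forall j, Dm d (fs j) (ps j)) -> Dm d f pi ->
     (forall x, cvgC (fun j => fs j x) (f x)) ->
     (forall i x, cvgC (fun j => ps j i x) (pi i x)) ->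
     (exists K, mcompact d K /\ forall j x, supp d (fs j) x -> K x) ->
     (exists L : R, forall j, lipschitz_on d (fun _ => True) L (fs j)) ->
     (forall K, mcompact d K -> exists L : R, forall j i, lipschitz_on d K L (ps j i)) ->
     cvgC (fun j => T (fs j) (ps j)) (T f pi)) /\
  (forall f pi i, Dm d f pi ->
     (exists (U : X -> Prop) (c : R[i]), mopen d U /\ (forall x, supp d f x -> U x) /\
        forall x, U x -> pi i x = c) ->
     T f pi = 0).

Definition push (R : realType) (X Y : Type) (m : nat) (phi : X -> Y) (T : fnl R X m) : fnl R Y m :=
  fun f pi => T (fun x => f (phi x)) (fun i x => pi i (phi x)).

Definition bidim (R : realType) (X : Type) (d : X -> X -> R) (Atl : chart R X -> Prop)
  (m p q : nat) (T : fnl R X m) : Prop :=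
  current d T /\
  forall f pi, Dm d f pi ->
    (exists U : X -> Prop, mopen d U /\ (forall x, supp d f x -> U x) /\
       ((exists J : {set 'I_m}, (p < #|J|)%N /\ forall j, j \in J -> hol_on Atl U (pi j)) \/
        (exists J : {set 'I_m}, (q < #|J|)%N /\
           forall j, j \in J -> hol_on Atl U (fun x => conjc (pi j x))))) ->
    T f pi = 0.

Definition dolbeault (R : realType) (X : Type) (d : X -> X -> R) (Atl : chart R X -> Prop)
  (m : nat) (S : fnl R X m) (Sp : 'I_m.+1 -> fnl R X m) : Prop :=
  (forall p : 'I_m.+1, bidim d Atl p (m - p) (Sp p)) /\
  forall f pi, Dm d f pi -> S f pi = \sum_(p < m.+1) Sp p f pi.

Definition consF (R : realType) (X : Type) (k : nat) (f : X -> R[i]) (pi : 'I_k -> X -> R[i]) :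
  'I_k.+1 -> X -> R[i] :=
  fun i => match unlift ord0 i with None => f | Some j => pi j end.

Definition cutoff (R : realType) (X : Type) (d : X -> X -> R) (f sigma : X -> R[i]) : Prop :=
  Dfun d sigma /\ exists U : X -> Prop, mopen d U /\ (forall x, supp d f x -> U x) /\
    forall x, U x -> sigma x = 1.

(* Dp is a Dolbeault decomposition of the boundary dT of T *)
Definition boundary_dolbeault (R : realType) (X : Type) (d : X -> X -> R) (Atl : chart R X -> Prop)
  (k : nat) (T : fnl R X k.+1) (Dp : 'I_k.+1 -> fnl R X k) : Prop :=
  (forall p : 'I_k.+1, bidim d Atl p (k - p) (Dp p)) /\
  forall f pi, Dm d f pi -> forall sigma, cutoff d f sigma ->
    T sigma (consF f pi) = \sum_(p < k.+1) Dp p f pi.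

Definition del_rel (R : realType) (X : Type) (d : X -> X -> R) (Atl : chart R X -> Prop)
  (k : nat) (T : fnl R X k.+1) (S : fnl R X k) : Prop :=
  exists (Tp : 'I_k.+2 -> fnl R X k.+1) (Dp : 'I_k.+2 -> 'I_k.+1 -> fnl R X k),
    dolbeault d Atl T Tp /\ (forall p, boundary_dolbeault d Atl (Tp p) (Dp p)) /\
    forall f pi, Dm d f pi ->
      S f pi = \sum_(p < k.+2 | (0 < p)%N) Dp p (inord p.-1) f pi.

Definition delbar_rel (R : realType) (X : Type) (d : X -> X -> R) (Atl : chart R X -> Prop)
  (k : nat) (T : fnl R X k.+1) (S : fnl R X k) : Prop :=
  exists (Tp : 'I_k.+2 -> fnl R X k.+1) (Dp : 'I_k.+2 -> 'I_k.+1 -> fnl R X k),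
    dolbeault d Atl T Tp /\ (forall p, boundary_dolbeault d Atl (Tp p) (Dp p)) /\
    forall f pi, Dm d f pi ->
      S f pi = \sum_(p < k.+2 | (p < k.+1)%N) Dp p (inord p) f pi.

(* Everything is transported along phi by composition, so the only analytic
   point is that composition with phi maps the test space D^m(Y) into D^m(X):
   a proper map pulls compact supports back to compact supports, and a locally
   Lipschitz map is uniformly Lipschitz at small scales on a compact set, while
   at large scales the boundedness of the test function takes over.  Holomorphy
   of phi transports the bidimension conditions, hence Dolbeault decompositions
   of T and of the boundaries of its components. *)
From HB Require Import structures.
From mathcomp Require Import all_boot all_order all_algebra.
From mathcomp Require Import complex.
From mathcomp Require Import reals.
From mathcomp Require Import lra.
From Stdlib Require Import Classical FunctionalExtensionality.
Set Implicit Arguments. Unset Strict Implicit. Unset Printing Implicit Defensive.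
Import Order.TTheory GRing.Theory Num.Theory.
Local Open Scope ring_scope.

Definition mcontinuous (R : realType) (X Y : Type) (dX : X -> X -> R) (dY : Y -> Y -> R)
  (phi : X -> Y) : Prop :=
  forall x (eps : R), 0 < eps -> exists del : R, 0 < del /\
    forall y, dX x y < del -> dY (phi x) (phi y) < eps.

Lemma cnorm_ge0 (R : realType) (z : R[i]) : 0 <= cnorm z.
Proof. by case: z => a b; rewrite /cnorm /= sqrtr_ge0. Qed.

Lemma cnorm0 (R : realType) : cnorm (0 : R[i]) = 0.
Proof. exact: Normc.normc0. Qed.

Lemma cnormB_sym (R : realType) (a b : R[i]) : cnorm (a - b) = cnorm (b - a).
Proof. by rewrite /cnorm -normcN opprB. Qed.

Lemma cnorm_le_addB (R : realType) (a b : R[i]) : cnorm a <= cnorm b + cnorm (a - b).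
Proof. by have := le_normcD b (a - b); rewrite addrC subrK. Qed.

Lemma cnormB_le (R : realType) (a b : R[i]) : cnorm (a - b) <= cnorm a + cnorm b.
Proof. by have := le_normcD a (- b); rewrite /cnorm normcN. Qed.

Lemma cvgC_bounded (R : realType) (u : nat -> R[i]) (l : R[i]) :
  cvgC u l -> exists b : R, forall j, cnorm (u j) <= b.
Proof.
move=> /(_ 1 ltr01) [N hN].
exists (cnorm l + 1 + \sum_(j < N) cnorm (u j)) => j.
have hsum : 0 <= \sum_(j < N) cnorm (u j) by apply: sumr_ge0 => ? _; exact: cnorm_ge0.
have [ltjN|leNj] := ltnP j N; last first.
  by have := hN j leNj; have := cnorm_le_addB (u j) l; lra.
have -> := bigD1 (Ordinal ltjN) (P := predT) (F := fun j : 'I_N => cnorm (u j)) isT.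
have : 0 <= \sum_(i < N | i != Ordinal ltjN) cnorm (u i).
  by apply: sumr_ge0 => ? _; exact: cnorm_ge0.
by have := cnorm_ge0 l; rewrite /=; lra.
Qed.

(* Below scale [del] use the local estimate, above it the crude bound [B]. *)
Lemma le_split_scale (R : realType) (del M B a t : R) :
  0 < del -> 0 <= M -> 0 <= B -> 0 <= t ->
  (t < del -> a <= M * t) -> a <= B -> a <= (M + B / del) * t.
Proof.
move=> del0 M0 B0 t0 hsmall hB.
have C0 : 0 <= B / del by apply: divr_ge0 => //; exact: ltW.
have [ltd|led] := ltP t del.
  have hCt : 0 <= B / del * t by exact: mulr_ge0.
  by have := hsmall ltd; nra.
have : B / del * del <= B / del * t by exact: ler_wpM2l.
rewrite divfK ?gt_eqF // => hBt.
have hMt : 0 <= M * t by exact: mulr_ge0.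
nra.
Qed.

Lemma mcompact_sub (R : realType) (X : Type) (d : X -> X -> R) (K C : X -> Prop) :
  mcompact d K -> (forall x, C x -> K x) -> mopen d (fun x => ~ C x) -> mcompact d C.
Proof.
move=> hK hCK hCo I O hO hcov.
have [[x0 Cx0]|hne] := classic (exists x, C x); last first.
  have g0 : 'I_0 -> I by case=> m; rewrite ltn0.
  by exists 0%N, g0 => x Cx; exfalso; apply: hne; exists x.
have [i0 _] := hcov _ Cx0.
pose O' (o : option I) := if o is Some i then O i else fun x => ~ C x.
have hO' : forall o, mopen d (O' o) by case=> [i|] /=; [exact: hO|].
have hcov' : forall x, K x -> exists o, O' o x.
  move=> x Kx; have [Cx|nCx] := classic (C x); last by exists None.
  by have [i hi] := hcov _ Cx; exists (Some i).
have [n [g hg]] := hK _ O' hO' hcov'.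
exists n, (fun j => if g j is Some i then i else i0) => x Cx.
by have [j hj] := hg x (hCK _ Cx); exists j; move: hj; case: (g j).
Qed.

Section MetricSpace.
Variables (R : realType) (X : Type) (d : X -> X -> R).
Hypothesis hm : is_metric d.

Lemma metric_refl0 (x : X) : d x x = 0.
Proof. by have [_ [dE _]] := hm; apply/(dE x x). Qed.

Lemma mopen_ball (x : X) (r : R) : mopen d (fun y => d x y < r).
Proof.
move: hm => [_ [_ [_ dT]]] y hy; exists (r - d x y); split; first by lra.
by move=> z hz; have := dT x y z; lra.
Qed.

Lemma mopen_notin_mclosure (S : X -> Prop) : mopen d (fun x => ~ mclosure d S x).
Proof.
move: hm => [_ [_ [_ dT]]] x hx.
have [r [r0 hr]] : exists r, 0 < r /\ forall y, S y -> ~ d x y < r.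
  apply: NNPP => hn; apply: hx => r r0; apply: NNPP => hn2; apply: hn.
  by exists r; split => // y Sy lt; apply: hn2; exists y.
exists (r / 2); split; first by lra.
move=> y hy hcl; have [z [Sz hz]] := hcl (r / 2) ltac:(lra).
by apply: (hr z Sz); have := dT x y z; lra.
Qed.

Lemma notin_supp_eq0 (f : X -> R[i]) (x : X) : ~ supp d f x -> f x = 0.
Proof.
move=> hn; apply: NNPP => hf; apply: hn => r r0.
by exists x; split; [apply/eqP | rewrite metric_refl0].
Qed.

Lemma lipschitz_on_max0 (S : X -> Prop) (L : R) (f : X -> R[i]) :
  lipschitz_on d S L f -> lipschitz_on d S (Num.max L 0) f.
Proof.
move=> hL x y Sx Sy; apply: le_trans (hL x y Sx Sy) _.
by apply: ler_wpM2r; [case: hm | rewrite le_max lexx].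
Qed.

Lemma mcompact_bounded (K : X -> Prop) (I : Type) (h : I -> X -> R) :
  mcompact d K ->
  (forall x, exists r b : R, 0 < r /\ forall i y, d x y < r -> h i y <= b) ->
  exists B : R, forall i x, K x -> h i x <= B.
Proof.
move=> hK hloc.
pose J := {x : X & {rb : R * R | 0 < rb.1 /\ forall i y, d x y < rb.1 -> h i y <= rb.2}}.
have hcov : forall x, K x -> exists j : J, d (projT1 j) x < (proj1_sig (projT2 j)).1.
  move=> x Kx; have [r [b [r0 hb]]] := hloc x.
  by exists (existT _ x (exist _ (r, b) (conj r0 hb))); rewrite /= metric_refl0.
have [n [g hg]] := hK J (fun j y => d (projT1 j) y < (proj1_sig (projT2 j)).1)
  ltac:(move=> j; exact: mopen_ball) hcov.
exists (\big[Num.max/0]_(j < n) (proj1_sig (projT2 (g j))).2) => i x Kx.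
have [j hj] := hg x Kx; apply: le_trans (le_bigmax _ _ j).
by case: (g j) hj => z [[r b] [r0 hb]] /= hz; exact: hb.
Qed.

Lemma lipschitz_family_bounded (I : Type) (F : I -> X -> R[i]) (K : X -> Prop) (L : R) :
  mcompact d K -> (forall i, lipschitz_on d (fun _ => True) L (F i)) ->
  (forall x, exists b : R, forall i, cnorm (F i x) <= b) ->
  (forall i x, ~ K x -> F i x = 0) ->
  exists B : R, forall i x, cnorm (F i x) <= B.
Proof.
move=> hK hL hpt hz.
have hL0 := fun i => lipschitz_on_max0 (hL i).
have hloc : forall x, exists r b : R, 0 < r /\ forall i y, d x y < r -> cnorm (F i y) <= b.
  move=> x; have [b hb] := hpt x.
  exists 1, (b + Num.max L 0); split => // i y hy.
  have := hL0 i y x Logic.I Logic.I; have := cnorm_le_addB (F i y) (F i x); have := hb i.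
  have [_ [_ [dS _]]] := hm; rewrite dS in hy.
  have : Num.max L 0 * d y x <= Num.max L 0 * 1.
    by apply: ler_wpM2l; [rewrite le_max lexx orbT | exact: ltW].
  lra.
have [B hB] := mcompact_bounded hK hloc.
exists (Num.max B 0) => i x; have [Kx|nKx] := classic (K x).
  by apply: le_trans (hB i x Kx) _; rewrite le_max lexx.
by rewrite hz // cnorm0 le_max lexx orbT.
Qed.

End MetricSpace.

Section Pullback.
Variables (R : realType) (X Y : Type) (dX : X -> X -> R) (dY : Y -> Y -> R) (phi : X -> Y).
Variables (AX : chart R X -> Prop) (AY : chart R Y -> Prop).
Hypotheses (hmX : is_metric dX) (hmY : is_metric dY).
Hypotheses (hc : mcontinuous dX dY phi) (hp : proper_map dX dY phi)
  (hl : loc_lipschitz_map dX dY phi).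
Hypothesis hhol : forall (V : Y -> Prop) (g : Y -> R[i]), mopen dY V -> hol_on AY V g ->
  hol_on AX (fun x => V (phi x)) (fun x => g (phi x)).
Arguments hc : clear implicits.
Arguments hl : clear implicits.

Lemma mopen_preim (V : Y -> Prop) : mopen dY V -> mopen dX (fun x => V (phi x)).
Proof.
move=> hV x hx; have [r [r0 hr]] := hV _ hx.
by have [del [del0 hd]] := hc x r r0; exists del; split => // y hy; exact/hr/hd.
Qed.

Lemma supp_comp (f : Y -> R[i]) (x : X) :
  supp dX (fun x => f (phi x)) x -> supp dY f (phi x).
Proof.
move=> hs r r0; have [del [del0 hd]] := hc x r r0.
by have [y [hy hxy]] := hs del del0; exists (phi y); split => //; exact: hd.
Qed.

Lemma mcompact_image (K : X -> Prop) :
  mcompact dX K -> mcompact dY (fun y => exists x, K x /\ phi x = y).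
Proof.
move=> hK I O hO hcov.
have [n [g hg]] := hK I (fun i x => O i (phi x)) (fun i => mopen_preim (hO i))
  ltac:(by move=> x Kx; apply: hcov; exists x).
by exists n, g => y [x [Kx <-]]; exact: hg.
Qed.

Lemma loc_lipschitz_uniform (K : X -> Prop) :
  mcompact dX K ->
  exists del M : R, 0 < del /\ 0 <= M /\
    forall x y, K x -> dX x y < del -> dY (phi x) (phi y) <= M * dX x y.
Proof.
move=> hK; have [d0 [_ [_ dT]]] := hmX.
pose J := {x : X & {rL : R * R | 0 < rL.1 /\ forall y z, dX x y < rL.1 -> dX x z < rL.1 ->
   dY (phi y) (phi z) <= rL.2 * dX y z}}.
pose rr (j : J) := (proj1_sig (projT2 j)).1.
pose LL (j : J) := (proj1_sig (projT2 j)).2.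
have rr0 : forall j, 0 < rr j by move=> [z [[r L] [r0 hb]]].
have hLL : forall j y z, dX (projT1 j) y < rr j -> dX (projT1 j) z < rr j ->
   dY (phi y) (phi z) <= LL j * dX y z by move=> [z [[r L] [r0 hb]]].
(* Half radii, so that the least half radius is a uniform scale: a point that close
   to a covered point stays in the full ball. *)
have hcov : forall x, K x -> exists j : J, dX (projT1 j) x < rr j / 2.
  move=> x Kx; have [r [L [r0 hb]]] := hl x.
  by exists (existT _ x (exist _ (r, L) (conj r0 hb))); rewrite /rr /= metric_refl0 //; lra.
have [n [g hg]] := hK J (fun j y => dX (projT1 j) y < rr j / 2)
  ltac:(move=> j; exact: mopen_ball) hcov.
exists (\big[Num.min/1]_(j < n) (rr (g j) / 2)).
exists (\big[Num.max/0]_(j < n) Num.max (LL (g j)) 0).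
split.
  apply: (big_ind (fun v => 0 < v)) => //; first by move=> a b ha hb; rewrite lt_min ha hb.
  by move=> j _; have := rr0 (g j); lra.
split.
  apply: (big_ind (fun v => 0 <= v)) => //; first by move=> a b ha hb; rewrite le_max ha.
  by move=> j _; rewrite le_max lexx orbT.
move=> x y Kx hxy; have [j hj] := hg x Kx.
have hmin := bigmin_le 1 j (fun j => rr (g j) / 2).
have hy : dX (projT1 (g j)) y < rr (g j) by have := dT (projT1 (g j)) x y; lra.
have hx : dX (projT1 (g j)) x < rr (g j) by have := rr0 (g j); lra.
apply: le_trans (hLL _ _ _ hx hy) _; apply: ler_wpM2r; first exact: d0.
by apply: le_trans (le_bigmax _ _ j); rewrite le_max lexx.
Qed.

Lemma lipschitz_on_mcompact (K : X -> Prop) :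
  mcompact dX K ->
  exists M : R, 0 <= M /\ forall x y, K x -> K y -> dY (phi x) (phi y) <= M * dX x y.
Proof.
move=> hK; have [d0 _] := hmX; have [e0 [_ [eS eT]]] := hmY.
have [del [M [del0 [M0 hM]]]] := loc_lipschitz_uniform hK.
have [[x0 Kx0]|hne] := classic (exists x, K x); last first.
  by exists 0; split => // x y Kx; exfalso; apply: hne; exists x.
have hloc : forall x, exists r b : R, 0 < r /\ forall (i : unit) y, dX x y < r ->
    dY (phi x0) (phi y) <= b.
  move=> x; have [del1 [del10 hd]] := hc x 1 ltr01.
  exists del1, (dY (phi x0) (phi x) + 1); split => // _ y hy.
  by have := eT (phi x0) (phi x) (phi y); have := hd y hy; lra.
have [B hB] := mcompact_bounded (h := fun _ y => dY (phi x0) (phi y)) hmX hK hloc.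
have B0 : 0 <= B by apply: le_trans (hB tt x0 Kx0); exact: e0.
exists (M + 2 * B / del); split.
  by apply: addr_ge0 => //; apply: divr_ge0; [apply: mulr_ge0 | apply: ltW].
move=> x y Kx Ky; apply: le_split_scale => //.
- by apply: mulr_ge0.
- by move=> ?; apply: hM.
- have := hB tt x Kx; have := hB tt y Ky; have := eT (phi x) (phi x0) (phi y).
  by rewrite (eS (phi x) (phi x0)) /=; lra.
Qed.

Lemma lipschitz_on_comp (K : X -> Prop) :
  mcompact dX K ->
  exists M : R, forall (L : R) (g : Y -> R[i]),
    lipschitz_on dY (fun y => exists x, K x /\ phi x = y) L g ->
    lipschitz_on dX K (Num.max L 0 * M) (fun x => g (phi x)).
Proof.
move=> hK; have [M [M0 hM]] := lipschitz_on_mcompact hK.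
exists M => L g hg x y Kx Ky.
have := lipschitz_on_max0 hmY hg (ex_intro _ x (conj Kx erefl)) (ex_intro _ y (conj Ky erefl)).
move/le_trans; apply; rewrite -mulrA.
by apply: ler_wpM2l; [rewrite le_max lexx orbT | exact: hM].
Qed.

Lemma lipschitz_comp (I : Type) (F : I -> Y -> R[i]) (K : Y -> Prop) (L : R) :
  mcompact dY K -> (forall i, lipschitz_on dY (fun _ => True) L (F i)) ->
  (forall y, exists b : R, forall i, cnorm (F i y) <= b) ->
  (forall i y, ~ K y -> F i y = 0) ->
  exists L' : R, forall i, lipschitz_on dX (fun _ => True) L' (fun x => F i (phi x)).
Proof.
move=> hK hL hpt hz; have [d0 [_ [dS _]]] := hmX.
have [B hB] := lipschitz_family_bounded hmY hK hL hpt hz.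
have [del [M [del0 [M0 hM]]]] := loc_lipschitz_uniform (hp hK).
have L0 : 0 <= Num.max L 0 by rewrite le_max lexx orbT.
have B0 : 0 <= 2 * Num.max B 0 by rewrite mulr_ge0 // le_max lexx orbT.
have hBm : forall i y, cnorm (F i y) <= Num.max B 0.
  by move=> i y; apply: le_trans (hB i y) _; rewrite le_max lexx.
pose L' := Num.max L 0 * M + 2 * Num.max B 0 / del.
have hK_lip : forall i x y, K (phi x) ->
    cnorm (F i (phi x) - F i (phi y)) <= L' * dX x y.
  move=> i x y Kx; apply: le_split_scale => //.
  - by apply: mulr_ge0.
  - move=> lt; apply: le_trans (lipschitz_on_max0 hmY (hL i) Logic.I Logic.I) _.
    by rewrite -mulrA; apply: ler_wpM2l => //; exact: hM.
  - by have := cnormB_le (F i (phi x)) (F i (phi y)); have := hBm i (phi x);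
      have := hBm i (phi y); lra.
exists L' => i x y _ _.
have [Kx|nKx] := classic (K (phi x)); first exact: hK_lip.
have [Ky|nKy] := classic (K (phi y)); first by rewrite cnormB_sym dS; exact: hK_lip.
rewrite !hz // subrr cnorm0; apply: mulr_ge0 => //.
by apply: addr_ge0; [exact: mulr_ge0 | apply: divr_ge0 => //; exact: ltW].
Qed.


Lemma liploc_comp (u : Y -> R[i]) : liploc dY u -> liploc dX (fun x => u (phi x)).
Proof.
move=> hu x; have [e0 _] := hmY.
have [r [L [r0 hL]]] := hu (phi x).
have [del [del0 hd]] := hc x r r0.
have [r2 [L2 [r20 hL2]]] := hl x.
exists (Num.min del r2), (Num.max L 0 * L2); split; first by rewrite lt_min del0.
move=> y z; rewrite !lt_min => /andP[hy1 hy2] /andP[hz1 hz2].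
apply: le_trans (lipschitz_on_max0 hmY hL (hd _ hy1) (hd _ hz1)) _.
by rewrite -mulrA; apply: ler_wpM2l; [rewrite le_max lexx orbT | exact: hL2].
Qed.

Lemma Dfun_comp (f : Y -> R[i]) : Dfun dY f -> Dfun dX (fun x => f (phi x)).
Proof.
move=> [[L hL] hK].
have hpt : forall y, exists b : R, unit -> cnorm (f y) <= b by move=> y; exists (cnorm (f y)).
have [L' hL'] := lipschitz_comp (F := fun _ : unit => f) hK (fun _ => hL) hpt
  (fun _ y => notin_supp_eq0 hmY (x := y)).
split; first by exists L'; exact: hL' tt.
apply: mcompact_sub (hp hK) _ _; first by move=> x; exact: supp_comp.
exact: (mopen_notin_mclosure hmX (S := fun x => f (phi x) != 0)).
Qed.

Lemma Dm_comp (m : nat) (f : Y -> R[i]) (pi : 'I_m -> Y -> R[i]) :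
  Dm dY f pi -> Dm dX (fun x => f (phi x)) (fun i x => pi i (phi x)).
Proof. by move=> [hf hpi]; split; [exact: Dfun_comp | move=> i; exact: liploc_comp]. Qed.

Lemma cutoff_comp (f sigma : Y -> R[i]) :
  cutoff dY f sigma -> cutoff dX (fun x => f (phi x)) (fun x => sigma (phi x)).
Proof.
move=> [hs [U [hU [hsU h1]]]]; split; first exact: Dfun_comp.
exists (fun x => U (phi x)); split; first exact: mopen_preim.
by split=> [x /supp_comp/hsU | x /h1].
Qed.

Lemma upd_comp (m : nat) (pi : 'I_m -> Y -> R[i]) (i : 'I_m) (w : Y -> R[i]) :
  (fun j x => upd pi i w j (phi x)) = upd (fun j x => pi j (phi x)) i (fun x => w (phi x)).
Proof. by apply: functional_extensionality => j; rewrite /upd; case: (j == i). Qed.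

Lemma consF_comp (k : nat) (f : Y -> R[i]) (pi : 'I_k -> Y -> R[i]) :
  (fun i x => consF f pi i (phi x)) = consF (fun x => f (phi x)) (fun i x => pi i (phi x)).
Proof. by apply: functional_extensionality => j; rewrite /consF; case: (unlift ord0 j). Qed.

Lemma current_push (m : nat) (T : fnl R X m) : current dX T -> current dY (push phi T).
Proof.
move=> [hlinf [hlinpi [hcont hloc]]].
split; first by move=> a f g pi hf hg; apply: hlinf; exact: Dm_comp.
split.
  move=> a f pi i u v hf hu hv; rewrite /push !upd_comp.
  by apply: hlinpi; [exact: Dm_comp | exact: liploc_comp | exact: liploc_comp].
split.
  move=> fs ps f pi hD hDf hcf hcp [K [hK hsK]] [L hL] hps.
  apply: (hcont (fun j x => fs j (phi x)) (fun j i x => ps j i (phi x))).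
  - by move=> j; exact: Dm_comp.
  - exact: Dm_comp.
  - by move=> x; apply: hcf.
  - by move=> i x; apply: hcp.
  - exists (fun x => K (phi x)); split; first exact: hp.
    by move=> j x /supp_comp/hsK.
  - apply: (lipschitz_comp hK hL (fun y => cvgC_bounded (hcf y))).
    by move=> j y hy; apply: (notin_supp_eq0 hmY) => /hsK.
  - move=> K2 hK2; have [L1 hL1] := hps _ (mcompact_image hK2).
    have [M hM] := lipschitz_on_comp hK2.
    by exists (Num.max L1 0 * M) => j i; apply: hM.
move=> f pi i hD [U [c [hU [hsU hcU]]]]; apply: (hloc _ _ i); first exact: Dm_comp.
exists (fun x => U (phi x)), c; split; first exact: mopen_preim.
by split=> [x /supp_comp/hsU | x /hcU].
Qed.

Lemma bidim_push (m p q : nat) (T : fnl R X m) :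
  bidim dX AX p q T -> bidim dY AY p q (push phi T).
Proof.
move=> [hcur hb]; split; first exact: current_push.
move=> f pi hD [U [hU [hsU hJ]]]; apply: hb; first exact: Dm_comp.
exists (fun x => U (phi x)); split; first exact: mopen_preim.
split; first by move=> x /supp_comp/hsU.
case: hJ => [[J [hJ hJh]]|[J [hJ hJh]]]; [left | right]; exists J; split => // j hj.
  exact: hhol (hJh j hj).
exact: (hhol (g := fun y => conjc (pi j y))) (hJh j hj).
Qed.

Lemma dolbeault_push (m : nat) (T : fnl R X m) (Tp : 'I_m.+1 -> fnl R X m) :
  dolbeault dX AX T Tp -> dolbeault dY AY (push phi T) (fun p => push phi (Tp p)).
Proof.
move=> [hTp hsum]; split=> [p | f pi hD]; first exact: bidim_push.
by rewrite /push hsum //; exact: Dm_comp.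
Qed.

Lemma boundary_dolbeault_push (k : nat) (T : fnl R X k.+1) (Dp : 'I_k.+1 -> fnl R X k) :
  boundary_dolbeault dX AX T Dp ->
  boundary_dolbeault dY AY (push phi T) (fun p => push phi (Dp p)).
Proof.
move=> [hDp hsum]; split=> [p | f pi hD sigma hcut]; first exact: bidim_push.
by rewrite /push consF_comp hsum //; [exact: Dm_comp | exact: cutoff_comp].
Qed.

(* The common shape of [del_rel] and [delbar_rel]: a selection [P] of the
   Dolbeault components of [T] and a choice [g] of a component of each boundary. *)
Lemma push_boundary_components (k : nat) (T : fnl R X k.+1) (S : fnl R X k)
    (P : pred 'I_k.+2) (g : 'I_k.+2 -> 'I_k.+1) :
  (exists (Tp : 'I_k.+2 -> fnl R X k.+1) (Dp : 'I_k.+2 -> 'I_k.+1 -> fnl R X k),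
    dolbeault dX AX T Tp /\ (forall p, boundary_dolbeault dX AX (Tp p) (Dp p)) /\
    forall f pi, Dm dX f pi -> S f pi = \sum_(p < k.+2 | P p) Dp p (g p) f pi) ->
  exists (Tp : 'I_k.+2 -> fnl R Y k.+1) (Dp : 'I_k.+2 -> 'I_k.+1 -> fnl R Y k),
    dolbeault dY AY (push phi T) Tp /\ (forall p, boundary_dolbeault dY AY (Tp p) (Dp p)) /\
    forall f pi, Dm dY f pi -> push phi S f pi = \sum_(p < k.+2 | P p) Dp p (g p) f pi.
Proof.
move=> [Tp [Dp [hT [hD hS]]]].
exists (fun p => push phi (Tp p)), (fun p q => push phi (Dp p q)).
split; first exact: dolbeault_push.
split; first by move=> p; exact: boundary_dolbeault_push.
by move=> f pi hf; rewrite /push hS //; exact: Dm_comp.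
Qed.

End Pullback.

Theorem proposition3p4 (R : realType) (X Y : Type)
  (dX : X -> X -> R) (AX : chart R X -> Prop)
  (dY : Y -> Y -> R) (AY : chart R Y -> Prop)
  (phi : X -> Y) (k : nat) (T : fnl R X k.+1) (S S' : fnl R X k) :
  complex_space dX AX -> complex_space dY AY ->
  hol_map dX AX dY AY phi -> proper_map dX dY phi -> loc_lipschitz_map dX dY phi ->
  current dX T ->
  del_rel dX AX T S -> delbar_rel dX AX T S' ->
  del_rel dY AY (push phi T) (push phi S) /\ delbar_rel dY AY (push phi T) (push phi S').
Proof.
move=> [hmX _] [hmY _] [hc hhol] hp hl _ hS hS'.
split; exact: (push_boundary_components hmX hmY hc hp hl hhol).
Qed.
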